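(* Let $R>r>0$ with $1<R/r<\sqrt{2}$. Then the standard torus $T_{R,r}$ is conformally equivalent to the standard torus $T_{R,\sqrt{R^2-r^2}}$. Moreover, the map $T_{R,r}\mapsto T_{R,\sqrt{R^2-r^2}}$ is a bijection between the set of standard tori $T_{R,r}$ with $1<R/r<\sqrt{2}$ and the set of standard tori $T_{R,r}$ with $\sqrt{2}<R/r$.
   Context: For $R>r>0$, the standard torus $T_{R,r}\subset\mathbb{R}^3$ is the image of $\Phi(\theta,\varphi)=\big((R+r\cos\varphi)\cos\theta,(R+r\cos\varphi)\sin\theta,r\sin\varphi\big)$, $(\theta,\varphi)\in\mathbb{R}^2$, equipped with the complex structure (conformal class) induced by the Euclidean metric of $\mathbb{R}^3$. Standard tori are indexed by the pairs $(R,r)$ with $R>r>0$. *)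

From Stdlib Require Import Reals.
From Coquelicot Require Import Coquelicot.
Open Scope R_scope.

Definition R3 := (R * R * R)%type.
Definition c1 (v : R3) : R := fst (fst v).
Definition c2 (v : R3) : R := snd (fst v).
Definition c3 (v : R3) : R := snd v.
Definition dot3 (u v : R3) : R := c1 u * c1 v + c2 u * c2 v + c3 u * c3 v.

(* Parametrization Phi_{a,r}(theta,phi) of the standard torus T_{a,r}
   (a = big radius R, r = small radius). *)
Definition Phi (a r : R) (th ph : R) : R3 :=
  (((a + r * cos ph) * cos th, (a + r * cos ph) * sin th), r * sin ph).

Definition torus (a r : R) (x : R3) : Prop := exists th ph, x = Phi a r th ph.

Definition partials (X : R -> R -> R3) (th ph : R) (Xt Xp : R3) : Prop :=
  is_derive (fun t => c1 (X t ph)) th (c1 Xt) /\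
  is_derive (fun t => c2 (X t ph)) th (c2 Xt) /\
  is_derive (fun t => c3 (X t ph)) th (c3 Xt) /\
  is_derive (fun s => c1 (X th s)) ph (c1 Xp) /\
  is_derive (fun s => c2 (X th s)) ph (c2 Xp) /\
  is_derive (fun s => c3 (X th s)) ph (c3 Xp).

Definition C1_with (f fx fy : R -> R -> R) : Prop :=
  forall x y,
    is_derive (fun t => f t y) x (fx x y) /\
    is_derive (fun t => f x t) y (fy x y) /\
    continuous (fun p : R * R => fx (fst p) (snd p)) (x, y) /\
    continuous (fun p : R * R => fy (fst p) (snd p)) (x, y).

Definition conformal_at (X Y : R -> R -> R3) (th ph : R) : Prop :=
  exists lam Xt Xp Yt Yp, 0 < lam /\
    partials X th ph Xt Xp /\ partials Y th ph Yt Yp /\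
    dot3 Yt Yt = lam * dot3 Xt Xt /\
    dot3 Yt Yp = lam * dot3 Xt Xp /\
    dot3 Yp Yp = lam * dot3 Xp Xp.

(* Conformal equivalence of standard tori T_{a,r} and T_{a',r'}: there is a
   bijection g : T_{a,r} -> T_{a',r'} which, read in the (theta,phi)
   parametrizations, is given by a C^1 map G = (G1,G2) of R^2 with positive
   Jacobian (orientation preserving, i.e. holomorphic rather than
   antiholomorphic) and which is conformal for the metrics induced by R^3. *)
Definition conf_equiv (a r a' r' : R) : Prop :=
  exists (g : R3 -> R3) (G1 G2 G1x G1y G2x G2y : R -> R -> R),
    C1_with G1 G1x G1y /\ C1_with G2 G2x G2y /\
    (forall th ph, g (Phi a r th ph) = Phi a' r' (G1 th ph) (G2 th ph)) /\
    (forall x y, torus a r x -> torus a r y -> g x = g y -> x = y) /\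
    (forall y, torus a' r' y -> exists x, torus a r x /\ g x = y) /\
    (forall th ph, 0 < G1x th ph * G2y th ph - G1y th ph * G2x th ph) /\
    (forall th ph, conformal_at (Phi a r)
                     (fun t s => Phi a' r' (G1 t s) (G2 t s)) th ph).

Definition std_small (p : R * R) : Prop :=
  0 < snd p < fst p /\ 1 < fst p / snd p < sqrt 2.
Definition std_large (p : R * R) : Prop :=
  0 < snd p < fst p /\ sqrt 2 < fst p / snd p.
Definition dual_torus (p : R * R) : R * R :=
  (fst p, sqrt (fst p ^ 2 - snd p ^ 2)).

From Stdlib Require Import Reals Lra ClassicalEpsilon.
From Coquelicot Require Import Coquelicot.
Open Scope R_scope.

(* In the angles (theta, phi) the metric of T_{a,r} is
   (a + r cos phi)^2 dtheta^2 + r^2 dphi^2.  For |c| < 1 the circle map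
   M_c : z |-> (z + c) / (1 + c z) has angular derivative (1 - c^2) / |1 + c z|^2, and
   with r' = sqrt (a^2 - r^2) and c = (a - r') / r this derivative equals
   r' / (a + r cos phi).  Sending (theta, phi) to the point of T_{a,r'} with
   longitude M_c(phi) and meridian angle M_{-c'}(-theta), c' = (a - r) / r',
   exchanges the two circles of the torus and pulls the metric of T_{a,r'}
   back to a multiple of that of T_{a,r}.  This works for every 0 < r < a; the dual
   pair (a, r), (a, r') has 1/(a/r)^2 + 1/(a/r')^2 = 1, so exactly one of
   a/r, a/r' is below sqrt 2 when neither equals it. *)

Definition angle_eq (x y : R) : Prop := cos x = cos y /\ sin x = sin y.

Lemma angle_eq_opp x y : angle_eq x y -> angle_eq (- x) (- y).
Proof. intros [Hc Hs]. split; [rewrite !cos_neg | rewrite !sin_neg]; congruence. Qed.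

Lemma sin_pow2 x : sin x ^ 2 = 1 - cos x ^ 2.
Proof. pose proof (sin2_cos2 x) as H. unfold Rsqr in H. lra. Qed.

Lemma sqrt_1_add_sqr t : sqrt (1 + t²) ^ 2 = 1 + t².
Proof. apply pow2_sqrt. pose proof (Rle_0_sqr t). lra. Qed.

Lemma cos_2atan t : cos (2 * atan t) = (1 - t ^ 2) / (1 + t ^ 2).
Proof.
  rewrite cos_2a, cos_atan, sin_atan.
  assert (Ht : 0 < 1 + t ^ 2) by (pose proof (pow2_ge_0 t); lra).
  pose proof (sqrt_lt_R0 (1 + t²) ltac:(unfold Rsqr; lra)).
  pose proof (sqrt_1_add_sqr t) as Hsq. unfold Rsqr in *.
  field_simplify; try lra. rewrite Hsq. field. lra.
Qed.

Lemma sin_2atan t : sin (2 * atan t) = 2 * t / (1 + t ^ 2).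
Proof.
  rewrite sin_2a, cos_atan, sin_atan.
  assert (Ht : 0 < 1 + t ^ 2) by (pose proof (pow2_ge_0 t); lra).
  pose proof (sqrt_lt_R0 (1 + t²) ltac:(unfold Rsqr; lra)).
  pose proof (sqrt_1_add_sqr t) as Hsq. unfold Rsqr in *.
  field_simplify; try lra. rewrite Hsq. field. lra.
Qed.

(* For |c| < 1, [mobius_angle c] is the continuous lift fixing 0 of the circle
   map z |-> (z + c) / (1 + c z), z = exp (i x) (see [cos_mobius_angle] and
   [sin_mobius_angle]); [mobius_den c x] is |1 + c z|^2. *)
Definition mobius_den (c x : R) : R := 1 + 2 * c * cos x + c ^ 2.
Definition mobius_angle (c x : R) : R := x - 2 * atan (c * sin x / (1 + c * cos x)).
Definition mobius_angle' (c x : R) : R := (1 - c ^ 2) / mobius_den c x.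

Section Mobius.

Variable c : R.
Hypothesis Hc : -1 < c < 1.

Lemma mobius_den_gt0 x : 0 < mobius_den c x.
Proof. unfold mobius_den. pose proof (COS_bound x). destruct (Rle_dec 0 c); nra. Qed.

Lemma one_add_mul_cos_gt0 x : 0 < 1 + c * cos x.
Proof. pose proof (COS_bound x). destruct (Rle_dec 0 c); nra. Qed.

Lemma mobius_den_sqr x :
  1 + (c * sin x / (1 + c * cos x)) ^ 2 = mobius_den c x / (1 + c * cos x) ^ 2.
Proof.
  pose proof (one_add_mul_cos_gt0 x). unfold mobius_den.
  field_simplify; try lra. rewrite sin_pow2. field. nra.
Qed.

Lemma cos_mobius_angle x :
  cos (mobius_angle c x) = ((1 + c ^ 2) * cos x + 2 * c) / mobius_den c x.
Proof.
  pose proof (one_add_mul_cos_gt0 x). pose proof (mobius_den_gt0 x).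
  unfold mobius_angle. rewrite cos_minus, cos_2atan, sin_2atan, mobius_den_sqr.
  unfold mobius_den in *. field_simplify; try lra. rewrite sin_pow2. field. lra.
Qed.

Lemma sin_mobius_angle x :
  sin (mobius_angle c x) = (1 - c ^ 2) * sin x / mobius_den c x.
Proof.
  pose proof (one_add_mul_cos_gt0 x). pose proof (mobius_den_gt0 x).
  unfold mobius_angle. rewrite sin_minus, cos_2atan, sin_2atan, mobius_den_sqr.
  unfold mobius_den in *. field_simplify; try lra.
  replace (sin x ^ 3) with (sin x * sin x ^ 2) by ring. rewrite sin_pow2. field. lra.
Qed.

Lemma is_derive_mobius_angle x : is_derive (mobius_angle c) x (mobius_angle' c x).
Proof.
  pose proof (one_add_mul_cos_gt0 x). pose proof (mobius_den_gt0 x).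
  assert (Hsq : (1 + c * cos x) * (1 + c * cos x) + c * sin x * (c * sin x)
                = mobius_den c x).
  { unfold mobius_den. replace (c * sin x * (c * sin x)) with (c ^ 2 * sin x ^ 2) by ring.
    rewrite sin_pow2. ring. }
  unfold mobius_angle, mobius_angle'. auto_derive; [lra|].
  unfold mobius_den in *.
  field_simplify; [| lra | split; [lra | rewrite Hsq; lra]].
  rewrite sin_pow2. field. lra.
Qed.

Lemma mobius_angle'_gt0 x : 0 < mobius_angle' c x.
Proof. pose proof (mobius_den_gt0 x). unfold mobius_angle'. apply Rdiv_lt_0_compat; nra. Qed.

Lemma continuous_mobius_angle' x : continuous (mobius_angle' c) x.
Proof.
  apply (ex_derive_continuous (mobius_angle' c)). pose proof (mobius_den_gt0 x).
  unfold mobius_angle', mobius_den in *. auto_derive. lra.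
Qed.

Lemma mobius_angle_compat x y : angle_eq x y -> angle_eq (mobius_angle c x) (mobius_angle c y).
Proof.
  intros [Hcos Hsin]. unfold angle_eq.
  rewrite !cos_mobius_angle, !sin_mobius_angle. unfold mobius_den. rewrite Hcos, Hsin. auto.
Qed.

Lemma mobius_den_opp_mobius_angle x :
  mobius_den (- c) (mobius_angle c x) = (1 - c ^ 2) ^ 2 / mobius_den c x.
Proof.
  pose proof (mobius_den_gt0 x). unfold mobius_den at 1. rewrite cos_mobius_angle.
  unfold mobius_den in *. field. lra.
Qed.

Lemma mobius_angle'_oppK x : mobius_angle' (- c) (mobius_angle c x) * mobius_angle' c x = 1.
Proof.
  pose proof (mobius_den_gt0 x). assert (0 < 1 - c ^ 2) by nra.
  unfold mobius_angle'. rewrite mobius_den_opp_mobius_angle.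
  unfold mobius_den in *. field. lra.
Qed.

End Mobius.

Lemma mobius_angle_oppK c x : -1 < c < 1 -> angle_eq (mobius_angle (- c) (mobius_angle c x)) x.
Proof.
  intros Hc.
  assert (Hc' : -1 < - c < 1) by lra.
  pose proof (mobius_den_gt0 c Hc x). assert (0 < 1 - c ^ 2) by nra.
  unfold angle_eq.
  rewrite (cos_mobius_angle (-c)), (sin_mobius_angle (-c)), (mobius_den_opp_mobius_angle c Hc),
    (cos_mobius_angle c Hc), (sin_mobius_angle c Hc) by exact Hc'.
  unfold mobius_den in *. split; field; lra.
Qed.

Lemma mobius_angle_inj c x y : -1 < c < 1 ->
  angle_eq (mobius_angle c x) (mobius_angle c y) -> angle_eq x y.
Proof.
  intros Hc H. apply (mobius_angle_compat (- c)) in H; [|lra].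
  destruct H as [Hcos Hsin].
  destruct (mobius_angle_oppK c x Hc) as [Cx Sx]. destruct (mobius_angle_oppK c y Hc) as [Cy Sy].
  split; congruence.
Qed.

Lemma Phi_angle_eq a r t1 p1 t2 p2 :
  angle_eq t1 t2 -> angle_eq p1 p2 -> Phi a r t1 p1 = Phi a r t2 p2.
Proof. intros [Ct St] [Cp Sp]. unfold Phi. rewrite Ct, St, Cp, Sp. reflexivity. Qed.

Lemma polar_norm2 rho t : (rho * cos t) ^ 2 + (rho * sin t) ^ 2 = rho ^ 2.
Proof. replace ((rho * sin t) ^ 2) with (rho ^ 2 * sin t ^ 2) by ring. rewrite sin_pow2. ring. Qed.

Lemma Phi_inj a r t1 p1 t2 p2 : 0 < r < a ->
  Phi a r t1 p1 = Phi a r t2 p2 -> angle_eq t1 t2 /\ angle_eq p1 p2.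
Proof.
  intros Hr H. unfold Phi in H. injection H as E1 E2 E3.
  pose proof (COS_bound p1). pose proof (COS_bound p2).
  assert (Hsin : sin p1 = sin p2) by (apply Rmult_eq_reg_l with r; lra).
  assert (Hrho : (a + r * cos p1) ^ 2 = (a + r * cos p2) ^ 2).
  { rewrite <- (polar_norm2 (a + r * cos p1) t1), <- (polar_norm2 (a + r * cos p2) t2), E1, E2.
    reflexivity. }
  assert (0 < a + r * cos p1) by nra. assert (0 < a + r * cos p2) by nra.
  assert (Hcos : cos p1 = cos p2).
  { apply Rmult_eq_reg_l with r; [|lra]. nra. }
  rewrite Hcos in E1, E2.
  split; split; auto; apply Rmult_eq_reg_l with (a + r * cos p2); lra.
Qed.

Lemma torus_map_exists a r a' r' (G1 G2 : R -> R -> R) : 0 < r < a ->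
  (forall t1 p1 t2 p2, angle_eq t1 t2 -> angle_eq p1 p2 ->
     angle_eq (G1 t1 p1) (G1 t2 p2) /\ angle_eq (G2 t1 p1) (G2 t2 p2)) ->
  exists g : R3 -> R3,
    forall th ph, g (Phi a r th ph) = Phi a' r' (G1 th ph) (G2 th ph).
Proof.
  intros Hr HG.
  pose (chart x := epsilon (inhabits (0, 0)) (fun p : R * R => x = Phi a r (fst p) (snd p))).
  exists (fun x => let p := chart x in Phi a' r' (G1 (fst p) (snd p)) (G2 (fst p) (snd p))).
  intros th ph. cbv zeta.
  assert (Hchart : let p := chart (Phi a r th ph) in Phi a r th ph = Phi a r (fst p) (snd p)).
  { apply (epsilon_spec (inhabits (0, 0))). exists (th, ph). reflexivity. }
  apply Phi_inj in Hchart; [|exact Hr]. destruct Hchart as [Ht Hp].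
  destruct (HG _ _ _ _ Ht Hp) as [H1 H2].
  symmetry. apply Phi_angle_eq; assumption.
Qed.

Lemma C1_with_snd (f df : R -> R) :
  (forall y, is_derive f y (df y)) -> (forall y, continuous df y) ->
  C1_with (fun _ y => f y) (fun _ _ => 0) (fun _ y => df y).
Proof.
  intros Hf Hdf x y. split; [exact (is_derive_const _ _)|]. split; [apply Hf|].
  split; [apply continuous_const|].
  apply (continuous_comp snd df); [apply continuous_snd | apply Hdf].
Qed.

Lemma C1_with_fst (f df : R -> R) :
  (forall x, is_derive f x (df x)) -> (forall x, continuous df x) ->
  C1_with (fun x _ => f x) (fun x _ => df x) (fun _ _ => 0).
Proof.
  intros Hf Hdf x y. split; [apply Hf|]. split; [exact (is_derive_const _ _)|].
  split; [|apply continuous_const].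
  apply (continuous_comp fst df); [apply continuous_fst | apply Hdf].
Qed.

Definition scal3 (k : R) (v : R3) : R3 := ((k * c1 v, k * c2 v), k * c3 v).

Lemma dot3_scal3 k l u v : dot3 (scal3 k u) (scal3 l v) = k * l * dot3 u v.
Proof. unfold dot3, scal3, c1, c2, c3; simpl. ring. Qed.

Lemma dot3C u v : dot3 u v = dot3 v u.
Proof. unfold dot3. ring. Qed.

Definition Phi_t (a r th ph : R) : R3 :=
  ((- ((a + r * cos ph) * sin th), (a + r * cos ph) * cos th), 0).
Definition Phi_p (a r th ph : R) : R3 :=
  ((- (r * sin ph * cos th), - (r * sin ph * sin th)), r * cos ph).

Lemma partials_Phi a r th ph : partials (Phi a r) th ph (Phi_t a r th ph) (Phi_p a r th ph).
Proof.
  unfold partials, Phi, Phi_t, Phi_p, c1, c2, c3; simpl.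
  repeat match goal with |- _ /\ _ => split end; auto_derive; auto; ring.
Qed.

Lemma dot3_Phi_t a r th ph : dot3 (Phi_t a r th ph) (Phi_t a r th ph) = (a + r * cos ph) ^ 2.
Proof. unfold dot3, Phi_t, c1, c2, c3; simpl. ring_simplify. rewrite sin_pow2. ring. Qed.

Lemma dot3_Phi_tp a r th ph : dot3 (Phi_t a r th ph) (Phi_p a r th ph) = 0.
Proof. unfold dot3, Phi_t, Phi_p, c1, c2, c3; simpl. ring. Qed.

Lemma dot3_Phi_p a r th ph : dot3 (Phi_p a r th ph) (Phi_p a r th ph) = r ^ 2.
Proof.
  unfold dot3, Phi_p, c1, c2, c3; simpl. ring_simplify. rewrite !sin_pow2. ring.
Qed.

Lemma partials_Phi_swap a r (F G : R -> R) dF dG th ph :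
  is_derive F th dF -> is_derive G ph dG ->
  partials (fun t s => Phi a r (G s) (F t)) th ph
    (scal3 dF (Phi_p a r (G ph) (F th))) (scal3 dG (Phi_t a r (G ph) (F th))).
Proof.
  intros HF HG.
  assert (UF : Derive (fun x => F x) th = dF) by exact (is_derive_unique _ _ _ HF).
  assert (UG : Derive (fun x => G x) ph = dG) by exact (is_derive_unique _ _ _ HG).
  assert (EF : ex_derive F th) by (exists dF; exact HF).
  assert (EG : ex_derive G ph) by (exists dG; exact HG).
  unfold partials, Phi, Phi_t, Phi_p, scal3, c1, c2, c3; simpl.
  repeat match goal with |- _ /\ _ => split end; auto_derive; auto; rewrite ?UF, ?UG; ring.
Qed.

(* Both first fundamental forms are diagonal, so conformality amounts to the
   equality of the ratios of their diagonal coefficients. *)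
Lemma conformal_at_Phi_swap a r a' r' (F G : R -> R) dF dG th ph :
  0 < r < a -> r' <> 0 -> is_derive F th dF -> is_derive G ph dG -> dF <> 0 ->
  (r' * dF * r) ^ 2 = ((a' + r' * cos (F th)) * dG * (a + r * cos ph)) ^ 2 ->
  conformal_at (Phi a r) (fun t s => Phi a' r' (G s) (F t)) th ph.
Proof.
  intros Hr Hr' HF HG HdF Hratio.
  pose proof (COS_bound ph).
  assert (HA : 0 < a + r * cos ph) by nra.
  exists ((r' * dF / (a + r * cos ph)) ^ 2), (Phi_t a r th ph), (Phi_p a r th ph),
    (scal3 dF (Phi_p a' r' (G ph) (F th))), (scal3 dG (Phi_t a' r' (G ph) (F th))).
  split.
  { apply pow2_gt_0. unfold Rdiv. apply Rmult_integral_contrapositive_currified;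
      [apply Rmult_integral_contrapositive_currified|apply Rinv_neq_0_compat]; lra. }
  split; [apply partials_Phi|]. split; [apply partials_Phi_swap; assumption|].
  rewrite !dot3_scal3, (dot3C (Phi_p a' r' _ _) (Phi_t _ _ _ _)),
    !dot3_Phi_t, !dot3_Phi_tp, !dot3_Phi_p.
  split; [|split].
  - field. lra.
  - ring.
  - apply Rmult_eq_reg_r with ((a + r * cos ph) ^ 2); [|apply pow_nonzero; lra].
    replace (dG * dG * (a' + r' * cos (F th)) ^ 2 * (a + r * cos ph) ^ 2)
      with (((a' + r' * cos (F th)) * dG * (a + r * cos ph)) ^ 2) by ring.
    rewrite <- Hratio. field. lra.
Qed.

Lemma is_derive_reflect (f : R -> R) df x :
  is_derive f (- x) df -> is_derive (fun t => f (- t)) x (- df).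
Proof.
  intros Hf.
  assert (U : Derive (fun y => f y) (- x) = df) by exact (is_derive_unique _ _ _ Hf).
  auto_derive; [exists df; exact Hf|]. rewrite U. ring.
Qed.

Lemma continuous_reflect (f : R -> R) x :
  continuous f (- x) -> continuous (fun t => - f (- t)) x.
Proof.
  intros Hf.
  pose proof (continuous_opp (fun t : R => t) x (continuous_id x)) as Hopp.
  exact (continuous_opp _ x (continuous_comp Ropp f x Hopp Hf)).
Qed.

Section DualTorus.

Variables a r r' : R.
Hypotheses (Hr : 0 < r < a) (Hr' : 0 < r') (Hdual : r' ^ 2 = a ^ 2 - r ^ 2).

Lemma dual_shift_bounds : -1 < (a - r') / r < 1.
Proof.
  assert (r' < a) by nra.
  assert (a < r + r').
  { assert (a ^ 2 < (r + r') ^ 2) by nra.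
    destruct (Rlt_or_le a (r + r')) as [|Hle]; [assumption|].
    assert ((r + r') ^ 2 <= a ^ 2) by (apply pow_incr; lra). lra. }
  split; [apply Rmult_lt_reg_r with r | apply Rmult_lt_reg_r with r]; try lra;
    unfold Rdiv; rewrite Rmult_assoc, Rinv_l; lra.
Qed.

Lemma mobius_angle'_dual_shift u :
  mobius_angle' ((a - r') / r) u * (a + r * cos u) = r'.
Proof.
  pose proof (mobius_den_gt0 _ dual_shift_bounds u) as HD.
  set (c := (a - r') / r) in *.
  assert (Hpoly : (1 - c ^ 2) * (a + r * cos u) = r' * mobius_den c u).
  { unfold c, mobius_den. field_simplify_eq; [|lra].
    replace (r' ^ 3) with (r' * r' ^ 2) by ring. rewrite Hdual. ring. }
  unfold mobius_angle'. unfold Rdiv. rewrite Rmult_assoc, (Rmult_comm (/ _)), <- Rmult_assoc, Hpoly.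
  field. lra.
Qed.

End DualTorus.

Section SwapMap.

Variables (a r a' r' c d : R) (g : R3 -> R3).
Hypotheses (Hc : -1 < c < 1) (Hd : -1 < d < 1).
Hypothesis Hg :
  forall th ph, g (Phi a r th ph) = Phi a' r' (mobius_angle c ph) (mobius_angle d (- th)).

Lemma swap_map_inj : 0 < r' < a' ->
  forall x y, torus a r x -> torus a r y -> g x = g y -> x = y.
Proof.
  intros Hr' x y [t1 [p1 ->]] [t2 [p2 ->]]. rewrite !Hg. intros H.
  apply Phi_inj in H as [Hp Ht]; [|exact Hr'].
  apply mobius_angle_inj in Hp; [|exact Hc].
  apply mobius_angle_inj, angle_eq_opp in Ht; [|exact Hd].
  rewrite !Ropp_involutive in Ht. apply Phi_angle_eq; assumption.
Qed.

Lemma swap_map_surj : forall y, torus a' r' y -> exists x, torus a r x /\ g x = y.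
Proof.
  intros y [t [p ->]]. exists (Phi a r (- mobius_angle (- d) p) (mobius_angle (- c) t)).
  split; [eexists; eexists; reflexivity|].
  rewrite Hg, Ropp_involutive. apply Phi_angle_eq.
  - pose proof (mobius_angle_oppK (- c) t ltac:(lra)) as H. rewrite Ropp_involutive in H. exact H.
  - pose proof (mobius_angle_oppK (- d) p ltac:(lra)) as H. rewrite Ropp_involutive in H. exact H.
Qed.

End SwapMap.

(* [mobius_angle'_dual_shift] for the dual pair (a, r', r), read through the
   inverse map [mobius_angle (- c')]. *)
Lemma dual_meridian_radius a r r' x : 0 < r < a -> 0 < r' -> r' ^ 2 = a ^ 2 - r ^ 2 ->
  let c' := (a - r) / r' in
  a + r' * cos (mobius_angle (- c') x) = r * mobius_angle' (- c') x.
Proof.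
  intros Hr Hr' Hdual c'.
  assert (Hr'a : 0 < r' < a) by nra.
  assert (Hdual' : r ^ 2 = a ^ 2 - r' ^ 2) by lra.
  pose proof (dual_shift_bounds a r' r Hr'a (proj1 Hr) Hdual') as Hc'.
  pose proof (mobius_angle'_oppK (- c') ltac:(fold c' in Hc'; lra) x) as Hinv.
  rewrite Ropp_involutive in Hinv.
  pose proof (mobius_angle'_dual_shift a r' r Hr'a (proj1 Hr) Hdual' (mobius_angle (- c') x))
    as Hscale.
  fold c' in Hscale.
  rewrite <- Hscale, <- (Rmult_1_l (a + _)), <- Hinv at 1. ring.
Qed.

Lemma conf_equiv_dual a r : 0 < r < a -> conf_equiv a r a (sqrt (a ^ 2 - r ^ 2)).
Proof.
  intros Hr.
  set (r' := sqrt (a ^ 2 - r ^ 2)).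
  assert (Hdual : r' ^ 2 = a ^ 2 - r ^ 2) by (apply pow2_sqrt; nra).
  assert (Hr' : 0 < r') by (apply sqrt_lt_R0; nra).
  assert (Hr'a : 0 < r' < a) by nra.
  set (c := (a - r') / r). set (c' := (a - r) / r').
  pose proof (dual_shift_bounds a r r' Hr Hr' Hdual) as Hc. fold c in Hc.
  assert (Hc' : -1 < - c' < 1).
  { pose proof (dual_shift_bounds a r' r Hr'a (proj1 Hr) ltac:(lra)). unfold c'. lra. }
  set (G1 := fun _ ph : R => mobius_angle c ph).
  set (G2 := fun th _ : R => mobius_angle (- c') (- th)).
  destruct (torus_map_exists a r a r' G1 G2 Hr) as [g Hg].
  { intros t1 p1 t2 p2 Ht Hp. unfold G1, G2.
    split; apply mobius_angle_compat; auto; apply angle_eq_opp; assumption. }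
  exists g, G1, G2, (fun _ _ => 0), (fun _ ph => mobius_angle' c ph),
    (fun th _ => - mobius_angle' (- c') (- th)), (fun _ _ => 0).
  split.
  { apply C1_with_snd; intros.
    - apply is_derive_mobius_angle; assumption.
    - apply continuous_mobius_angle'; assumption. }
  split.
  { apply (C1_with_fst (fun t => mobius_angle (- c') (- t))); intros.
    - apply is_derive_reflect, is_derive_mobius_angle; assumption.
    - apply continuous_reflect, continuous_mobius_angle'; assumption. }
  split; [exact Hg|].
  split; [exact (swap_map_inj a r a r' c (- c') g Hc Hc' Hg Hr'a)|].
  split; [exact (swap_map_surj a r a r' c (- c') g Hc Hc' Hg)|].
  split.
  { intros th ph.
    pose proof (mobius_angle'_gt0 c Hc ph). pose proof (mobius_angle'_gt0 (- c') Hc' (- th)).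
    nra. }
  intros th ph.
  apply (conformal_at_Phi_swap a r a r' (fun t => mobius_angle (- c') (- t)) (mobius_angle c)
           (- mobius_angle' (- c') (- th)) (mobius_angle' c ph)); try lra.
  - apply is_derive_reflect, is_derive_mobius_angle. exact Hc'.
  - apply is_derive_mobius_angle. exact Hc.
  - pose proof (mobius_angle'_gt0 (- c') Hc' (- th)). lra.
  - pose proof (dual_meridian_radius a r r' (- th) Hr Hr' Hdual) as Hmeridian.
    pose proof (mobius_angle'_dual_shift a r r' Hr Hr' Hdual ph) as Hscale.
    cbv zeta in Hmeridian. fold c' in Hmeridian. fold c in Hscale.
    rewrite Hmeridian, (Rmult_assoc (r * _)), Hscale. ring.
Qed.

Lemma lt_sqrt_iff q k : 0 <= q -> 0 <= k -> (q < sqrt k <-> q ^ 2 < k).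
Proof.
  intros Hq Hk. rewrite <- (sqrt_pow2 q Hq) at 1. split; [apply sqrt_lt_0_alt|].
  intros H. apply sqrt_lt_1_alt. split; [apply pow2_ge_0 | exact H].
Qed.

Lemma sqrt_lt_iff q k : 0 <= q -> 0 <= k -> (sqrt k < q <-> k < q ^ 2).
Proof.
  intros Hq Hk. rewrite <- (sqrt_pow2 q Hq) at 1. split; [apply sqrt_lt_0_alt|].
  intros H. apply sqrt_lt_1_alt. split; [exact Hk | exact H].
Qed.

Lemma ratio_pow2_lt a r k : 0 < r -> ((a / r) ^ 2 < k <-> a ^ 2 < k * r ^ 2).
Proof.
  intros Hr. assert (Hr2 : 0 < r ^ 2) by (apply pow_lt; lra).
  replace (a ^ 2) with ((a / r) ^ 2 * r ^ 2) by (field; lra).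
  split; intros H; [apply Rmult_lt_compat_r | apply Rmult_lt_reg_r with (r ^ 2)]; assumption.
Qed.

Lemma ratio_pow2_gt a r k : 0 < r -> (k < (a / r) ^ 2 <-> k * r ^ 2 < a ^ 2).
Proof.
  intros Hr. assert (Hr2 : 0 < r ^ 2) by (apply pow_lt; lra).
  replace (a ^ 2) with ((a / r) ^ 2 * r ^ 2) by (field; lra).
  split; intros H; [apply Rmult_lt_compat_r | apply Rmult_lt_reg_r with (r ^ 2)]; assumption.
Qed.

Lemma one_lt_ratio a r : 0 < r < a -> 1 < a / r.
Proof.
  intros Hr. apply Rmult_lt_reg_r with r; [lra|].
  unfold Rdiv. rewrite Rmult_assoc, Rinv_l; lra.
Qed.

Lemma std_small_iff p : std_small p <-> 0 < snd p < fst p /\ fst p ^ 2 < 2 * snd p ^ 2.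
Proof.
  destruct p as [a r]. unfold std_small; simpl.
  split; intros [Hr H]; split; try exact Hr;
    assert (Hq : 0 <= a / r) by (apply Rdiv_le_0_compat; lra).
  - apply (ratio_pow2_lt a r 2); [lra|]. apply lt_sqrt_iff; [exact Hq | lra | apply H].
  - split; [apply one_lt_ratio; exact Hr|].
    apply lt_sqrt_iff; [exact Hq | lra |]. apply ratio_pow2_lt; [lra | exact H].
Qed.

Lemma std_large_iff p : std_large p <-> 0 < snd p < fst p /\ 2 * snd p ^ 2 < fst p ^ 2.
Proof.
  destruct p as [a r]. unfold std_large; simpl.
  split; intros [Hr H]; split; try exact Hr;
    assert (Hq : 0 <= a / r) by (apply Rdiv_le_0_compat; lra).
  - apply (ratio_pow2_gt a r 2); [lra|]. apply sqrt_lt_iff; [exact Hq | lra | apply H].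
  - apply sqrt_lt_iff; [exact Hq | lra |]. apply ratio_pow2_gt; [lra | exact H].
Qed.

Lemma dual_torus_spec p : 0 < snd p < fst p ->
  fst (dual_torus p) = fst p /\ 0 < snd (dual_torus p) < fst p /\
  snd (dual_torus p) ^ 2 = fst p ^ 2 - snd p ^ 2.
Proof.
  destruct p as [a r]. unfold dual_torus; cbn [fst snd]. intros Hr.
  assert (Hs2 : sqrt (a ^ 2 - r ^ 2) ^ 2 = a ^ 2 - r ^ 2) by (apply pow2_sqrt; nra).
  assert (Hs : 0 < sqrt (a ^ 2 - r ^ 2)) by (apply sqrt_lt_R0; nra).
  assert (Hlt : sqrt (a ^ 2 - r ^ 2) < sqrt (a ^ 2)) by (apply sqrt_lt_1_alt; nra).
  rewrite sqrt_pow2 in Hlt by lra.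
  split; [reflexivity|]. split; [split; assumption | exact Hs2].
Qed.

Lemma dual_torusK p : 0 < snd p < fst p -> dual_torus (dual_torus p) = p.
Proof.
  destruct p as [a r]. unfold dual_torus; cbn [fst snd]. intros Hr.
  rewrite pow2_sqrt by nra.
  replace (a ^ 2 - (a ^ 2 - r ^ 2)) with (r ^ 2) by ring.
  rewrite sqrt_pow2 by lra. reflexivity.
Qed.

Lemma std_large_dual_torus p : std_small p -> std_large (dual_torus p).
Proof.
  rewrite std_small_iff, std_large_iff. intros [Hp Hsq].
  destruct (dual_torus_spec p Hp) as (Ha & Hs & Hs2). rewrite Ha, Hs2. split; lra.
Qed.

Lemma std_small_dual_torus p : std_large p -> std_small (dual_torus p).
Proof.
  rewrite std_large_iff, std_small_iff. intros [Hp Hsq].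
  destruct (dual_torus_spec p Hp) as (Ha & Hs & Hs2). rewrite Ha, Hs2. split; lra.
Qed.

Theorem proposition2 :
  (forall a r : R, 0 < r -> r < a -> 1 < a / r < sqrt 2 ->
     conf_equiv a r a (sqrt (a ^ 2 - r ^ 2))) /\
  (forall p, std_small p -> std_large (dual_torus p)) /\
  (forall p q, std_small p -> std_small q -> dual_torus p = dual_torus q -> p = q) /\
  (forall q, std_large q -> exists p, std_small p /\ dual_torus p = q).
Proof.
  split; [intros a r Hr Hra _; apply conf_equiv_dual; lra|].
  split; [exact std_large_dual_torus|].
  split.
  - intros p q Hp Hq Hpq.
    apply std_small_iff in Hp as [Hp _]. apply std_small_iff in Hq as [Hq _].
    rewrite <- (dual_torusK p Hp), <- (dual_torusK q Hq), Hpq. reflexivity.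
  - intros q Hq. exists (dual_torus q). split; [exact (std_small_dual_torus q Hq)|].
    apply dual_torusK. apply std_large_iff in Hq as [Hq _]. exact Hq.
Qed.
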